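(* Let $X$ be a Banach space and let $R:\Omega\to L(X)$ be a pseudo-resolvent which satisfies condition $\mathbf{(G_{k_0})}$ for some integer $k_0\ge1$. Then $$\ker R(\mu)^{k+1}=\ker R(\mu)^{k_0}\quad\text{and}\quad\overline{{\rm ran}\,R(\mu)^{k+1}}=\overline{{\rm ran}\,R(\mu)^{k_0}}$$ for all $\mu\in\Omega$ and all $k\ge k_0$.
   Context: Let $\Omega\subset\mathbb{C}$ be open. A map $R:\Omega\to L(X)$ is a pseudo-resolvent if $\frac{R(\lambda)-R(\mu)}{\mu-\lambda}=R(\lambda)R(\mu)$ for all $\lambda,\mu\in\Omega$ with $\lambda\neq\mu$. Condition $\mathbf{(G_k)}$ (for an integer $k\ge1$): there exist $M>0$ and a sequence $(\lambda_n)_{n\ge1}$ in $\Omega\cap\mathbb{R}$ with $\lambda_n\to\infty$ and $\|\lambda_n^{2-k}R(\lambda_n)\|\le M$ for all $n\ge1$. *)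

(* Complex Banach space = CompleteNormedModule C_AbsRing. *)
From Stdlib Require Import Reals.
From Coquelicot Require Import Coquelicot.
Open Scope R_scope.

Section Defs.
Context {X : CompleteNormedModule C_AbsRing}.

Definition is_bounded_linear (T : X -> X) : Prop :=
  (forall x y : X, T (plus x y) = plus (T x) (T y)) /\
  (forall (a : C) (x : X), T (scal a x) = scal a (T x)) /\
  (exists c : R, forall x : X, norm (T x) <= c * norm x).

Definition pseudo_resolvent (Omega : C -> Prop) (Rf : C -> X -> X) : Prop :=
  (forall l : C, Omega l -> is_bounded_linear (Rf l)) /\
  (forall l m : C, Omega l -> Omega m -> l <> m ->
     forall x : X,
       scal (Cinv (Cminus m l)) (minus (Rf l x) (Rf m x)) = Rf l (Rf m x)).

(* Condition (G_k): there exist M > 0 and real λ_n ∈ Ω with λ_n -> +oo and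
   ||λ_n^(2-k) R(λ_n)|| <= M (operator norm bound written pointwise). *)
Definition cond_G (Omega : C -> Prop) (Rf : C -> X -> X) (k : nat) : Prop :=
  exists (M : R) (lam : nat -> R),
    0 < M /\
    (forall n, Omega (RtoC (lam n))) /\
    (forall n, 0 < lam n) /\
    is_lim_seq lam p_infty /\
    (forall n (x : X),
       norm (scal (RtoC (powerRZ (lam n) (2 - Z.of_nat k)%Z)) (Rf (RtoC (lam n)) x))
         <= M * norm x).

Definition op_pow (T : X -> X) (n : nat) : X -> X := fun x => Nat.iter n T x.

Definition op_ker (T : X -> X) : X -> Prop := fun x => T x = zero.
Definition op_ran (T : X -> X) : X -> Prop := fun y => exists x, T x = y.

Definition nclosure (A : X -> Prop) : X -> Prop :=
  fun x => forall eps : R, 0 < eps -> exists y, A y /\ norm (minus x y) < eps.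

End Defs.

From Stdlib Require Import Reals Lra Lia.
From Coquelicot Require Import Coquelicot.
Open Scope R_scope.

(* Write T = R(mu) and Q = R(lam).  The resolvent identity Q = T + (mu - lam) T Q,
   applied under T^j, gives T^(j+1) Q x = (T^j Q x - T^(j+1) x) / (mu - lam).  Since
   ||Q|| = O(lam^(k0-2)) along the sequence of (G_k0) and |mu - lam| >= lam/2, k0-1
   such steps give T^(k0-1) Q x = O(1/lam).  Hence for m >= k0,
   T^m x + (mu - lam) T^m Q x -> 0.  The second term lies in ran T^(m+1) and vanishes
   when T^(m+1) x = 0, so ker T^(m+1) = ker T^m and T^m x lies in the closure of
   ran T^(m+1): both chains are stationary from k0 on. *)

(* [a j] stands for ||T^j Q x|| and [b j] for ||T^j x||; the recursion of [pow_bound]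
   absorbs one factor lam per step, from lam * a (S j) <= 2 (a j + b (S j)). *)
Fixpoint pow_bound (K0 : R) (b : nat -> R) (j : nat) : R :=
  match j with
  | O => K0
  | S i => 2 * (pow_bound K0 b i + b (S i))
  end.

Lemma pow_bound_spec (lam K0 : R) (a b : nat -> R) (p : nat) :
  1 <= lam -> (forall j, 0 <= b j) -> lam * a O <= K0 * lam ^ p ->
  (forall j, (j < p)%nat -> lam * a (S j) <= 2 * (a j + b (S j))) ->
  forall j, (j <= p)%nat -> lam * a j <= pow_bound K0 b j * lam ^ (p - j).
Proof.
  intros Hlam Hb Ha0 Hstep j.
  induction j as [|j IH]; intros Hj; [rewrite Nat.sub_0_r; exact Ha0|].
  assert (Hpow : 1 <= lam ^ (p - S j)) by (apply pow_R1_Rle; lra).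
  assert (Haj : a j <= pow_bound K0 b j * lam ^ (p - S j)).
  { apply (Rmult_le_reg_l lam); [lra|].
    replace (lam * (pow_bound K0 b j * lam ^ (p - S j)))
      with (pow_bound K0 b j * lam ^ (p - j)).
    - apply IH. lia.
    - replace (p - j)%nat with (S (p - S j)) by lia. simpl. ring. }
  pose proof (Hstep j Hj). pose proof (Hb (S j)). simpl pow_bound. nra.
Qed.

Lemma powerRZ_cond_G_exponent (lam : R) (p : nat) :
  0 < lam -> powerRZ lam (2 - Z.of_nat (S p)) * lam ^ p = lam.
Proof.
  intros Hlam. rewrite pow_powerRZ, <- powerRZ_add by lra.
  replace (2 - Z.of_nat (S p) + Z.of_nat p)%Z with 1%Z by lia. apply powerRZ_1.
Qed.

Lemma Cmod_sub_RtoC_ge (mu : C) (lam : R) :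
  2 * Cmod mu <= lam -> lam <= 2 * Cmod (Cminus mu (RtoC lam)).
Proof.
  intros Hlam.
  pose proof (Cmod_ge_0 mu) as Hmu0.
  pose proof (Cmod_triangle (Cminus mu (RtoC lam)) (Copp mu)) as Htri.
  replace (Cplus (Cminus mu (RtoC lam)) (Copp mu)) with (Copp (RtoC lam)) in Htri
    by (unfold Cminus; ring).
  rewrite !Cmod_opp, Cmod_R, Rabs_pos_eq in Htri by lra. lra.
Qed.

Section Operators.
Context {X : CompleteNormedModule C_AbsRing}.

Definition linear_op (T : X -> X) : Prop :=
  (forall x y : X, T (plus x y) = plus (T x) (T y)) /\
  (forall (a : C) (x : X), T (scal a x) = scal a (T x)).

Lemma bounded_linear_op (T : X -> X) : is_bounded_linear T -> linear_op T.
Proof. intros [HTp [HTs _]]. split; assumption. Qed.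

Lemma linear_op_zero (T : X -> X) : linear_op T -> T zero = zero.
Proof.
  intros [_ HTs]. rewrite <- (scal_zero_l (zero : X)) at 1. rewrite HTs. exact (scal_zero_l _).
Qed.

Lemma linear_op_opp (T : X -> X) (x : X) : linear_op T -> T (opp x) = opp (T x).
Proof.
  intros [_ HTs].
  assert (Hopp : forall y : X, opp y = scal (opp one : C_AbsRing) y)
    by (intros; symmetry; exact (scal_opp_one _)).
  rewrite !Hopp. apply HTs.
Qed.

Lemma linear_op_pow (T : X -> X) (n : nat) : linear_op T -> linear_op (op_pow T n).
Proof.
  intros [HTp HTs]; unfold op_pow.
  induction n as [|n [IHp IHs]]; split; intros; simpl; auto.
  - rewrite IHp; auto.
  - rewrite IHs; auto.
Qed.

Lemma op_pow_add (T : X -> X) (m n : nat) (x : X) :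
  op_pow T (m + n) x = op_pow T m (op_pow T n x).
Proof. exact (Nat.iter_add m n _ T x). Qed.

Lemma op_pow_comm (T Q : X -> X) (n : nat) (x : X) :
  (forall y, T (Q y) = Q (T y)) -> op_pow T n (Q x) = Q (op_pow T n x).
Proof. intros HTQ. symmetry. apply Nat.iter_swap_gen. auto. Qed.

Lemma norm_scal_C (a : C) (x : X) : norm (scal a x) = Cmod a * norm x.
Proof.
  assert (Hscal : forall (b : C) (y : X), norm (scal b y) <= Cmod b * norm y)
    by (intros; exact (norm_scal _ _)).
  destruct (Ceq_dec a 0) as [-> | Ha].
  - replace (scal (RtoC 0) x) with (zero : X) by (symmetry; exact (scal_zero_l x)).
    rewrite Cmod_0, Rmult_0_l. exact (norm_zero (K := C_AbsRing) (V := X)).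
  - apply Rle_antisym; [apply Hscal|].
    assert (Hinv : x = scal (/ a)%C (scal a x)).
    { rewrite scal_assoc. replace (mult (/ a)%C a) with (one : C_AbsRing).
      - symmetry. exact (scal_one x).
      - change (RtoC 1 = (/ a * a)%C). field. exact Ha. }
    pose proof (Hscal (/ a)%C (scal a x)) as Hle.
    rewrite <- Hinv, Cmod_inv in Hle by exact Ha.
    assert (Hpos : 0 < Cmod a) by (apply Cmod_gt_0; exact Ha).
    apply (Rmult_le_compat_l (Cmod a)) in Hle; [|lra].
    rewrite <- Rmult_assoc, Rinv_r, Rmult_1_l in Hle by lra.
    exact Hle.
Qed.

Lemma nclosure_subset (A : X -> Prop) (x : X) : A x -> nclosure A x.
Proof.
  intros HAx eps Heps. exists x. split; [exact HAx|].
  rewrite minus_eq_zero.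
  eapply Rle_lt_trans; [apply Req_le, (norm_zero (K := C_AbsRing) (V := X)) | exact Heps].
Qed.

Lemma nclosure_trans (A B : X -> Prop) (x : X) :
  (forall y, A y -> nclosure B y) -> nclosure A x -> nclosure B x.
Proof.
  intros HAB HAx eps Heps.
  destruct (HAx (eps / 2)) as [y [HAy Hxy]]; [lra|].
  destruct (HAB y HAy (eps / 2)) as [z [HBz Hyz]]; [lra|].
  exists z. split; [exact HBz|].
  rewrite (minus_trans y).
  eapply Rle_lt_trans; [apply (norm_triangle (K := C_AbsRing) (V := X))|]. lra.
Qed.

Lemma nclosure_mono (A B : X -> Prop) (x : X) :
  (forall y, A y -> B y) -> nclosure A x -> nclosure B x.
Proof. intros HAB. apply nclosure_trans. intros y HAy. apply nclosure_subset, HAB, HAy. Qed.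

Lemma op_ker_pow_stable (T : X -> X) (k0 : nat) :
  linear_op T ->
  (forall m x, (k0 <= m)%nat -> op_pow T (S m) x = zero -> op_pow T m x = zero) ->
  forall k x, (k0 <= k)%nat -> op_ker (op_pow T k) x <-> op_ker (op_pow T k0) x.
Proof.
  intros HT Hdesc k x Hk. unfold op_ker.
  induction Hk as [|k Hk IH]; [tauto|].
  rewrite <- IH. split; [apply Hdesc, Hk|].
  intros Hx. change (T (op_pow T k x) = zero). rewrite Hx. exact (linear_op_zero T HT).
Qed.

Lemma op_ran_closure_pow_stable (T : X -> X) (k0 : nat) :
  (forall m x, (k0 <= m)%nat -> nclosure (op_ran (op_pow T (S m))) (op_pow T m x)) ->
  forall k x, (k0 <= k)%nat ->
    nclosure (op_ran (op_pow T k)) x <-> nclosure (op_ran (op_pow T k0)) x.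
Proof.
  intros Hdense k x Hk.
  induction Hk as [|k Hk IH]; [tauto|].
  rewrite <- IH. split.
  - apply nclosure_mono. intros y [z <-]. exists (T z). symmetry. apply Nat.iter_succ_r.
  - apply nclosure_trans. intros y [z <-]. apply Hdense, Hk.
Qed.

(* The relation between T = R(mu) and Q = R(lam), with d = mu - lam. *)
Definition resolvent_pair (T Q : X -> X) (d : C) : Prop :=
  linear_op Q /\
  (forall y, Q y = plus (T y) (scal d (T (Q y)))) /\
  (forall y, T (Q y) = Q (T y)).

Section ResolventPair.
Variables (T Q : X -> X) (d : C).
Hypotheses (HT : linear_op T) (HQTd : resolvent_pair T Q d).

Lemma resolvent_pair_pow_step (j : nat) (x : X) :
  op_pow T j (Q x) = plus (op_pow T (S j) x) (scal d (op_pow T (S j) (Q x))).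
Proof.
  destruct HQTd as [_ [HQ _]]. destruct (linear_op_pow T j HT) as [Hp Hs].
  rewrite HQ at 1. rewrite Hp, Hs. unfold op_pow. rewrite !Nat.iter_succ_r. reflexivity.
Qed.

Lemma resolvent_pair_pow_ker (m : nat) (x : X) :
  op_pow T (S m) x = zero -> op_pow T m (Q x) = zero.
Proof.
  destruct HQTd as [HQlin [HQ HTQ]]. intros Hx.
  rewrite op_pow_comm by exact HTQ. rewrite HQ, HTQ.
  change (T (op_pow T m x)) with (op_pow T (S m) x). rewrite Hx, (linear_op_zero Q HQlin).
  rewrite (scal_zero_r (K := C_AbsRing) (V := X)). exact (plus_zero_r _).
Qed.

Lemma resolvent_pair_pow_ran (m : nat) (x : X) :
  op_ran (op_pow T (S m)) (scal d (op_pow T m (Q x))).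
Proof.
  destruct HQTd as [_ [HQ _]]. destruct (linear_op_pow T m HT) as [_ Hs].
  destruct HT as [HTp HTs].
  set (z := plus x (scal d (Q x))).
  assert (HTz : T z = Q x) by (unfold z; rewrite HTp, HTs; auto).
  exists (scal d z). transitivity (op_pow T m (T (scal d z))); [apply Nat.iter_succ_r|].
  rewrite HTs, Hs, HTz. reflexivity.
Qed.

End ResolventPair.

Definition pow_approximable (T : X -> X) (m : nat) : Prop :=
  forall x eps, 0 < eps -> exists Q d,
    resolvent_pair T Q d /\ norm (plus (op_pow T m x) (scal d (op_pow T m (Q x)))) < eps.

Lemma pow_approximable_ker (T : X -> X) (m : nat) (x : X) :
  linear_op T -> pow_approximable T m -> op_pow T (S m) x = zero -> op_pow T m x = zero.
Proof.
  intros HT Happ Hx. apply (norm_eq_zero (K := C_AbsRing) (V := X)).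
  apply Rle_antisym; [|apply norm_ge_0].
  apply Rnot_lt_le. intros Hpos.
  destruct (Happ x _ Hpos) as [Q [d [HQTd Hsmall]]].
  rewrite (resolvent_pair_pow_ker T Q d HQTd m x Hx) in Hsmall.
  rewrite (scal_zero_r (K := C_AbsRing) (V := X)), plus_zero_r in Hsmall. lra.
Qed.

Lemma pow_approximable_ran (T : X -> X) (m : nat) (x : X) :
  linear_op T -> pow_approximable T m -> nclosure (op_ran (op_pow T (S m))) (op_pow T m x).
Proof.
  intros HT Happ eps Heps.
  destruct (Happ x eps Heps) as [Q [d [HQTd Hsmall]]].
  destruct (resolvent_pair_pow_ran T Q d HT HQTd m x) as [z Hz].
  exists (op_pow T (S m) (opp z)). split; [eexists; reflexivity|].
  rewrite (linear_op_opp _ _ (linear_op_pow T (S m) HT)), Hz.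
  unfold minus. rewrite opp_opp. exact Hsmall.
Qed.

Lemma resolvent_pair_pow_bound (T Q : X -> X) (d : C) (lam K0 : R) (p : nat) (x : X) :
  linear_op T -> resolvent_pair T Q d -> 1 <= lam -> lam <= 2 * Cmod d ->
  lam * norm (Q x) <= K0 * lam ^ p ->
  lam * norm (op_pow T p (Q x)) <= pow_bound K0 (fun j => norm (op_pow T j x)) p.
Proof.
  intros HT HQTd Hlam Hd Hbase.
  assert (Hstep : forall j, (j < p)%nat ->
    lam * norm (op_pow T (S j) (Q x)) <=
    2 * (norm (op_pow T j (Q x)) + norm (op_pow T (S j) x))).
  { intros j _.
    set (u := op_pow T (S j) x). set (w := op_pow T (S j) (Q x)).
    assert (Hdw : scal d w = minus (op_pow T j (Q x)) u).
    { rewrite (resolvent_pair_pow_step T Q d HT HQTd j x). fold u w.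
      unfold minus.
      rewrite (plus_comm u), <- plus_assoc, (plus_opp_r (G := X)), plus_zero_r.
      reflexivity. }
    assert (Hnorm : Cmod d * norm w <= norm (op_pow T j (Q x)) + norm u).
    { rewrite <- norm_scal_C, Hdw. unfold minus.
      rewrite <- (norm_opp (K := C_AbsRing) (V := X) u).
      apply (norm_triangle (K := C_AbsRing) (V := X)). }
    pose proof (norm_ge_0 w). nra. }
  pose proof (pow_bound_spec lam K0 (fun j => norm (op_pow T j (Q x)))
    (fun j => norm (op_pow T j x)) p Hlam (fun j => norm_ge_0 _) Hbase Hstep p (le_n p)) as H.
  rewrite Nat.sub_diag, pow_O, Rmult_1_r in H. exact H.
Qed.

Lemma pseudo_resolvent_pair (Omega : C -> Prop) (Rf : C -> X -> X) (l mu : C) :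
  pseudo_resolvent Omega Rf -> Omega l -> Omega mu -> l <> mu ->
  resolvent_pair (Rf mu) (Rf l) (Cminus mu l).
Proof.
  intros [Hlin Hid] Hl Hmu Hlmu.
  assert (Hml : Cminus mu l <> 0%C).
  { intros E. apply Hlmu. replace l with (Cminus mu (Cminus mu l)) by (unfold Cminus; ring).
    rewrite E. unfold Cminus. ring. }
  assert (Hlm : Cminus l mu <> 0%C).
  { intros E. apply Hlmu. replace l with (Cplus (Cminus l mu) mu) by (unfold Cminus; ring).
    rewrite E. ring. }
  set (T := Rf mu). set (Q := Rf l).
  assert (HQT : forall x, scal (/ Cminus mu l)%C (minus (Q x) (T x)) = Q (T x))
    by (intros; apply Hid; auto).
  assert (HTQ : forall x, scal (/ Cminus l mu)%C (minus (T x) (Q x)) = T (Q x))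
    by (intros; apply Hid; auto).
  assert (Hcomm : forall x, T (Q x) = Q (T x)).
  { intros x. rewrite <- HQT, <- HTQ, <- (opp_minus (Q x) (T x)).
    rewrite (scal_opp_r (K := C_AbsRing) (V := X)), <- (scal_opp_l (K := C_AbsRing) (V := X)).
    f_equal. change (Copp (/ Cminus l mu) = / Cminus mu l)%C. field. auto. }
  split; [exact (bounded_linear_op Q (Hlin l Hl))|split; [|exact Hcomm]].
  intros x. rewrite Hcomm, <- HQT, scal_assoc.
  replace (mult (Cminus mu l) (/ Cminus mu l)%C) with (one : C_AbsRing)
    by (change (RtoC 1 = Cminus mu l * / Cminus mu l)%C; field; exact Hml).
  rewrite scal_one. unfold minus.
  rewrite (plus_comm (Q x)), plus_assoc, (plus_opp_r (G := X)), plus_zero_l. reflexivity.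
Qed.

Section ConditionG.
Variables (Omega : C -> Prop) (Rf : C -> X -> X) (mu : C) (p : nat).
Hypotheses (Hres : pseudo_resolvent Omega Rf) (HG : cond_G Omega Rf (S p)) (Hmu : Omega mu).

Lemma cond_G_pow_small (x : X) (eps : R) :
  0 < eps -> exists l,
    resolvent_pair (Rf mu) (Rf l) (Cminus mu l) /\ norm (op_pow (Rf mu) p (Rf l x)) < eps.
Proof.
  intros Heps. destruct HG as [M [lam [HM [HOm [Hpos [Hlim Hbd]]]]]].
  set (K := pow_bound (M * norm x) (fun j => norm (op_pow (Rf mu) j x)) p).
  destruct (proj2 (is_lim_seq_spec lam p_infty) Hlim (Rmax (2 * Cmod mu + 1) (Rabs K / eps)))
    as [n Hn].
  specialize (Hn n (le_n n)). apply Rmax_Rlt in Hn as [Hn1 Hn2].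
  pose proof (Cmod_ge_0 mu) as Hmu0.
  assert (Hd : lam n <= 2 * Cmod (Cminus mu (RtoC (lam n))))
    by (apply Cmod_sub_RtoC_ge; lra).
  assert (Hne : RtoC (lam n) <> mu).
  { intros E. rewrite E in Hd.
    replace (Cminus mu mu) with (RtoC 0) in Hd by (unfold Cminus; ring).
    rewrite Cmod_0 in Hd. lra. }
  pose proof (pseudo_resolvent_pair Omega Rf _ mu Hres (HOm n) Hmu Hne) as HQTd.
  exists (RtoC (lam n)). split; [exact HQTd|].
  assert (Hbase : lam n * norm (Rf (RtoC (lam n)) x) <= M * norm x * lam n ^ p).
  { pose proof (Hbd n x) as Hx.
    assert (Hr : 0 < powerRZ (lam n) (2 - Z.of_nat (S p))) by (apply powerRZ_lt, Hpos).
    assert (Hpow : 0 < lam n ^ p) by (apply pow_lt, Hpos).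
    rewrite norm_scal_C, Cmod_R, Rabs_pos_eq in Hx by lra.
    rewrite <- (powerRZ_cond_G_exponent (lam n) p (Hpos n)) at 1.
    replace (powerRZ (lam n) (2 - Z.of_nat (S p)) * lam n ^ p * norm (Rf (RtoC (lam n)) x))
      with (powerRZ (lam n) (2 - Z.of_nat (S p)) * norm (Rf (RtoC (lam n)) x) * lam n ^ p)
      by ring.
    apply Rmult_le_compat_r; lra. }
  pose proof (resolvent_pair_pow_bound _ _ _ (lam n) _ p x
    (bounded_linear_op _ (proj1 Hres mu Hmu)) HQTd ltac:(lra) Hd Hbase) as Hb.
  fold K in Hb.
  assert (HK : Rabs K < eps * lam n).
  { replace (Rabs K) with (Rabs K / eps * eps) by (field; lra). nra. }
  pose proof (Rle_abs K). nra.
Qed.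

Lemma cond_G_pow_approximable (m : nat) : (S p <= m)%nat -> pow_approximable (Rf mu) m.
Proof.
  intros Hm x eps Heps.
  set (T := Rf mu).
  destruct (cond_G_pow_small (op_pow T (m - S p) x) eps Heps) as [l [HQTd Hsmall]].
  exists (Rf l), (Cminus mu l). split; [exact HQTd|].
  rewrite (resolvent_pair_pow_step T (Rf l) _ (bounded_linear_op _ (proj1 Hres mu Hmu)) HQTd)
    in Hsmall.
  rewrite <- (op_pow_comm T (Rf l) (m - S p) x (proj2 (proj2 HQTd))), <- !op_pow_add in Hsmall.
  replace (S p + (m - S p))%nat with m in Hsmall by lia. exact Hsmall.
Qed.

End ConditionG.

End Operators.

Theorem mainTheorem4 (X : CompleteNormedModule C_AbsRing)
  (Omega : C -> Prop) (Rf : C -> X -> X) (k0 : nat) :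
  open Omega ->
  pseudo_resolvent Omega Rf ->
  (1 <= k0)%nat ->
  cond_G Omega Rf k0 ->
  forall (mu : C) (k : nat), Omega mu -> (k0 <= k)%nat ->
    (forall x : X, op_ker (op_pow (Rf mu) (S k)) x <-> op_ker (op_pow (Rf mu) k0) x) /\
    (forall x : X, nclosure (op_ran (op_pow (Rf mu) (S k))) x <->
                   nclosure (op_ran (op_pow (Rf mu) k0)) x).
Proof.
  intros _ Hres Hk0 HG mu k Hmu Hk.
  destruct k0 as [|p]; [lia|].
  assert (HT : linear_op (Rf mu)) by exact (bounded_linear_op _ (proj1 Hres mu Hmu)).
  pose proof (cond_G_pow_approximable Omega Rf mu p Hres HG Hmu) as Happ.
  split; intros x.
  - apply op_ker_pow_stable; [exact HT| |lia].
    intros m y Hm. apply pow_approximable_ker; auto.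
  - apply op_ran_closure_pow_stable; [|lia].
    intros m y Hm. apply pow_approximable_ran; auto.
Qed.
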